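(* Let $X$ be a $k$-regular distance regular graph of diameter $d$, let $Y=\mathrm{LD}(X)$, and let $Y_i$ be the $i$-th distance digraph of $Y$. Let $\lambda$ be an eigenvalue of $A(X)$ with $\lambda\neq\pm k$, let $E_\lambda$ be the orthogonal projection onto the $\lambda$-eigenspace of $A(X)$, and set $S_\lambda := D_t^TE_\lambda D_h - D_h^TE_\lambda D_t$. Then \[S_\lambda\in\mathrm{span}\{S(Y_1),S(Y_2),\dots,S(Y_d)\}.\]
   Context: $X$ is a connected distance regular graph (for vertices $u,v$ at distance $\ell$, the number of vertices at distance $i$ from $u$ and $j$ from $v$ depends only on $i,j,\ell$). Each edge $\{a,b\}$ of $X$ is replaced by arcs $(a,b)$ and $(b,a)$; the line digraph $\mathrm{LD}(X)$ has the arcs as vertices, with an arc from $(a,b)$ to $(c,d)$ iff $b=c$. For a digraph $Y$, its $i$-th distance digraph $Y_i$ has the same vertex set, with $a$ adjacent to $b$ iff the directed distance from $a$ to $b$ in $Y$ is $i$. For a digraph $Z$ with $01$-adjacency matrix $A(Z)$, its skew-adjacency matrix is $S(Z)=A(Z)-A(Z)^T$. $D_t$ and $D_h$ have rows indexed by vertices and columns by arcs: $(D_t)_{u,(a,b)}=1$ iff $u=a$, $(D_h)_{u,(a,b)}=1$ iff $u=b$, and $0$ otherwise. *)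

From HB Require Import structures.
From mathcomp Require Import all_boot all_order all_algebra.
From mathcomp Require Import reals.
Set Implicit Arguments. Unset Strict Implicit. Unset Printing Implicit Defensive.
Import Order.TTheory GRing.Theory Num.Theory.
Local Open Scope ring_scope.

Definition walkb (T : finType) (e : rel T) (n : nat) (x y : T) : bool :=
  [exists p : n.-tuple T, path e x p && (last x p == y)].

Definition dist_is (T : finType) (e : rel T) (x y : T) (n : nat) : bool :=
  walkb e n x y && [forall m : 'I_n, ~~ walkb e m x y].

Definition simple_graph (T : finType) (e : rel T) : Prop :=
  symmetric e /\ irreflexive e.

Definition connected_graph (T : finType) (e : rel T) : Prop :=
  forall x y, connect e x y.

Definition regular_graph (T : finType) (e : rel T) (k : nat) : Prop :=
  forall x, #|[set y | e x y]| = k.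

Definition diameter_is (T : finType) (e : rel T) (d : nat) : Prop :=
  (forall x y, exists2 n, (n <= d)%N & dist_is e x y n) /\
  (exists x y, dist_is e x y d).

(* distance regular: the intersection numbers p^l_{ij} are well defined *)
Definition distance_regular (T : finType) (e : rel T) : Prop :=
  forall (l i j : nat) (u v u' v' : T),
    dist_is e u v l -> dist_is e u' v' l ->
    #|[set w | dist_is e u w i && dist_is e v w j]| =
    #|[set w | dist_is e u' w i && dist_is e v' w j]|.

Definition arc_pred (T : finType) (e : rel T) : pred (T * T) :=
  fun p => e p.1 p.2.

Definition arc (T : finType) (e : rel T) : finType := {p : T * T | arc_pred e p}.

Definition ld_rel (T : finType) (e : rel T) : rel (arc e) :=
  fun a b => (val a).2 == (val b).1.

Definition adjmx (R : nzRingType) (V : finType) (r : rel V) : 'M[R]_#|V| :=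
  \matrix_(i, j) (r (enum_val i) (enum_val j))%:R.

Definition skew_adjmx (R : nzRingType) (V : finType) (r : rel V) : 'M[R]_#|V| :=
  adjmx R r - (adjmx R r)^T.

Definition dist_digraph (V : finType) (r : rel V) (i : nat) : rel V :=
  fun a b => dist_is r a b i.

Definition Dt (R : nzRingType) (T : finType) (e : rel T) : 'M[R]_(#|T|, #|arc e|) :=
  \matrix_(i, j) (enum_val i == (val (enum_val j)).1)%:R.

Definition Dh (R : nzRingType) (T : finType) (e : rel T) : 'M[R]_(#|T|, #|arc e|) :=
  \matrix_(i, j) (enum_val i == (val (enum_val j)).2)%:R.

Definition orth_proj (R : fieldType) (n : nat) (E U : 'M[R]_n) : Prop :=
  E^T = E /\ E *m E = E /\ (E :=: U)%MS.

From Pilot Require Import Defs.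
From HB Require Import structures.
From mathcomp Require Import all_boot all_order all_algebra.
From mathcomp Require Import reals.
Import Order.TTheory GRing.Theory Num.Theory.
Local Open Scope ring_scope.
Set Implicit Arguments. Unset Strict Implicit.

(* The orthogonal projection E onto an eigenspace of a
      symmetric real matrix A is a polynomial in A (via Cayley-Hamilton and the
      fact that, for symmetric B, M B^m = 0 implies M B = 0).  Hence E lies in
      every family of matrices containing the scalars and closed under sums,
      scaling and right multiplication by A.
   2. Bose-Mesner algebra.  For a distance regular graph the matrices whose
      (u,v) entry depends only on dist(u,v) form such a family for A = A(X);
      closure under right multiplication by A is where the intersection
      numbers p^l_{m1} enter.  So E_{uv} = f(dist(u,v)) for some f.
   3. Line digraph.  For arcs p != q, dist_Y(p,q) = dist_X(head p, tail q) + 1,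
      while (S_lambda)_{pq} = E(tail p, head q) - E(head p, tail q).
   Comparing entries, S_lambda = sum_{i=1}^d (f(d) - f(i-1)) S(Y_i). *)

Section SymmetricMatrices.
Variable R : realType.

(* Over the reals, N N^T = 0 forces N = 0 (its diagonal entries are sums of squares). *)
Lemma mulmx_tr_eq0 (m n : nat) (N : 'M[R]_(m, n)) : N *m N^T = 0 -> N = 0.
Proof.
move=> NNt0; apply/matrixP => i j; rewrite mxE.
move/matrixP: NNt0 => /(_ i i); rewrite !mxE.
under eq_bigr do rewrite mxE -expr2.
move/eqP; rewrite psumr_eq0; last by move=> k _; exact: sqr_ge0.
by move/allP/(_ j (mem_index_enum _)); rewrite /= sqrf_eq0 => /eqP.
Qed.

(* For a symmetric B, M B B = 0 implies M B = 0, since (M B)(M B)^T = M B B M^T. *)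
Lemma sym_mulmx_sqr_eq0 m n (M : 'M[R]_(m, n)) (B : 'M[R]_n) :
  B^T = B -> M *m B *m B = 0 -> M *m B = 0.
Proof.
by move=> symB MBB0; apply: mulmx_tr_eq0; rewrite trmx_mul symB mulmxA MBB0 mul0mx.
Qed.

Lemma sym_mulmx_expr_eq0 n (M B : 'M[R]_n.+1) m :
  B^T = B -> M *m B ^+ m = 0 -> M *m B = 0.
Proof.
move=> symB; elim: m M => [|m IHm] M; first by rewrite expr0 mulmx1 => ->; rewrite mul0mx.
case: m IHm => [|m] IHm; first by rewrite expr1.
move=> MBm0; apply: IHm; rewrite exprSr mulmxE mulrA -mulmxE.
by apply: sym_mulmx_sqr_eq0 => //; rewrite -!mulmxA !mulmxE -expr2 -exprD addn2 -mulmxE.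
Qed.

Lemma horner_mx_tr n (A : 'M[R]_n.+1) p :
  A^T = A -> (horner_mx A p)^T = horner_mx A p.
Proof.
move=> symA; elim/poly_ind: p => [|p c IHp]; first by rewrite rmorph0 trmx0.
rewrite rmorphD rmorphM /= horner_mx_X horner_mx_C linearD /= tr_scalar_mx.
have commAp := comm_horner_mx2 A 'X p; rewrite horner_mx_X in commAp.
by rewrite -mulmxE trmx_mul IHp symA mulmxE commAp.
Qed.

Section EigenProjection.
Variables (n : nat) (A E : 'M[R]_n.+1) (lam : R).
Hypotheses (symA : A^T = A) (symE : E^T = E) (idemE : E *m E = E).
Hypothesis imE : (E :=: eigenspace A lam)%MS.

(* Write chi_A = q (X - lam)^m with q(lam) != 0 and
   let P = q(A) / q(lam).  Then E P = E because E kills A - lam, and P kills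
   (A - lam)^m, hence A - lam by symmetry, so P = P E; transposing gives E = P. *)
Lemma eigenproj_horner : exists p, E = horner_mx A p.
Proof.
pose B := A - lam%:M.
have hornerB : horner_mx A ('X - lam%:P) = B.
  by rewrite rmorphB /= horner_mx_X horner_mx_C.
have symB : B^T = B by rewrite -hornerB horner_mx_tr.
have EB0 : E *m B = 0.
  by apply/sub_kermxP; rewrite -[kermx _]/(eigenspace A lam) -imE submx_refl.
have [m [q /= q_lam chiE]] := multiplicity_XsubC (char_poly A) lam.
have {}q_lam : q.[lam] != 0.
  by move: q_lam; rewrite monic_neq0 ?char_poly_monic.
set c := q.[lam] in q_lam *.
have [r qE] : exists r, q = c%:P + ('X - lam%:P) * r.
  have /factor_theorem[r qr] : root (q - c%:P) lam.
    by rewrite /root hornerD hornerN hornerC subrr.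
  by exists r; rewrite mulrC -qr addrC subrK.
pose P := c^-1 *: horner_mx A q.
have EP : E *m P = E.
  rewrite -scalemxAr qE rmorphD rmorphM /= horner_mx_C hornerB mulmxDr.
  rewrite mul_mx_scalar -mulmxE mulmxA EB0 mul0mx addr0.
  by rewrite scalerA mulVf ?scale1r.
have PB0 : P *m B = 0.
  apply: (sym_mulmx_expr_eq0 (m := m) symB).
  rewrite -scalemxAl -hornerB -rmorphXn mulmxE -rmorphM -chiE.
  by rewrite -[LHS]/(c^-1 *: horner_mx A (char_poly A)) Cayley_Hamilton scaler0.
have PE : P *m E = P.
  have : (P <= E)%MS by rewrite imE; apply/sub_kermxP.
  by case/submxP => X ->; rewrite -mulmxA idemE.
have symP : P^T = P by rewrite /P linearZ /= horner_mx_tr.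
exists (c^-1 *: q); rewrite linearZ /= -/P.
by rewrite -EP -[E *m P]trmxK trmx_mul symP symE PE symP.
Qed.

End EigenProjection.

Lemma eigenproj_ind n (A E : 'M[R]_n) (lam : R) (P : 'M[R]_n -> Prop) :
  A^T = A -> E^T = E -> E *m E = E -> (E :=: eigenspace A lam)%MS ->
  (forall c, P c%:M) -> (forall M N, P M -> P N -> P (M + N)) ->
  (forall c M, P M -> P (c *: M)) -> (forall M, P M -> P (M *m A)) -> P E.
Proof.
case: n A E P => [|n] A E P symA symE idemE imE Pscalar PD PZ PA.
  by rewrite (_ : E = 0%:M); [exact: Pscalar | apply/matrixP => -[]].
have [p ->] := eigenproj_horner symA symE idemE imE.
elim/poly_ind: p => [|p c IHp].
  by rewrite rmorph0 -(scale0r 1%:M) scalemx1; exact: Pscalar.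
rewrite rmorphD rmorphM /= horner_mx_X horner_mx_C -mulmxE.
exact: PD (PA _ IHp) (Pscalar c).
Qed.

End SymmetricMatrices.

Section Walks.
Variables (T : finType) (e : rel T).

Lemma walkb0 x y : walkb e 0 x y = (x == y).
Proof.
apply/existsP/idP => [[p]|/eqP <-]; first by rewrite (tuple0 p) /= => /eqP ->.
by exists [tuple]; rewrite /= eqxx.
Qed.

Lemma walkbS n x y : walkb e n.+1 x y = [exists z, e x z && walkb e n z y].
Proof.
apply/existsP/existsP => [[p]|[z /andP[exz /existsP[s ps]]]].
  case/tupleP: p => z s /= /andP[/andP[exz ps] ls].
  by exists z; rewrite exz; apply/existsP; exists s; rewrite ps.
by exists [tuple of z :: s]; rewrite /= exz.
Qed.

Lemma dist_is_uniq x y n m : dist_is e x y n -> dist_is e x y m -> n = m.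
Proof.
move=> /andP[wn /forallP minn] /andP[wm /forallP minm].
case: (ltngtP n m) => // [ltnm|ltmn]; first by move: (minm (Ordinal ltnm)); rewrite wn.
by move: (minn (Ordinal ltmn)); rewrite wm.
Qed.

Lemma dist_is0 x y : dist_is e x y 0 = (x == y).
Proof. by rewrite /dist_is walkb0; case: (x == y) => //=; apply/forallP => -[]. Qed.

Lemma dist_is1 x y : irreflexive e -> dist_is e x y 1 = e x y.
Proof.
move=> irr; rewrite /dist_is walkbS.
apply/andP/idP => [[/existsP[z /andP[exz]]]|exy]; first by rewrite walkb0 => /eqP <-.
split; first by apply/existsP; exists y; rewrite exy walkb0 eqxx.
apply/forallP => i; rewrite (ord1 i) /= walkb0; apply/eqP => eqxy.
by rewrite eqxy irr in exy.
Qed.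

End Walks.

Section DistanceFunction.
Variables (T : finType) (e : rel T) (d : nat).
Hypothesis diam_le : forall x y : T, exists2 n, (n <= d)%N & dist_is e x y n.

Definition dst (x y : T) : nat :=
  if [pick n : 'I_d.+1 | dist_is e x y n] is Some n then nat_of_ord n else 0%N.

Lemma dst_spec x y : dist_is e x y (dst x y).
Proof.
rewrite /dst; case: pickP => [n //|no_dist].
have [n le_nd dist_n] := diam_le x y.
by move: (no_dist (Ordinal (le_nd : (n < d.+1)%N))); rewrite /= dist_n.
Qed.

Lemma dst_le x y : (dst x y <= d)%N.
Proof. by rewrite /dst; case: pickP => [n _|//]; rewrite -ltnS. Qed.

Lemma dist_isE x y n : dist_is e x y n = (n == dst x y).
Proof.
apply/idP/eqP => [dist_n|->]; last exact: dst_spec.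
exact: dist_is_uniq dist_n (dst_spec x y).
Qed.

Lemma dst_eq0 x y : (dst x y == 0%N) = (x == y).
Proof. by rewrite -(dist_is0 e) dist_isE eq_sym. Qed.

(* Directed distance in the line digraph: an arc reaches another arc in n.+1
   steps iff the head of the first reaches the tail of the second in n steps,
   so dist_Y(p, q) = dist_X(head p, tail q) + 1 for p != q. *)
Lemma walkb_ld n (p q : Defs.arc e) :
  walkb (@ld_rel T e) n.+1 p q = walkb e n (val p).2 (val q).1.
Proof.
elim: n p => [|n IHn] p.
  rewrite walkbS walkb0; apply/existsP/eqP => [[r /andP[/eqP -> ]]|pq].
    by rewrite walkb0 => /eqP ->.
  by exists q; rewrite walkb0 eqxx andbT /ld_rel pq.
rewrite !walkbS; apply/existsP/existsP => [[r /andP[/eqP pr]]|[z /andP[ez wz]]].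
  by rewrite IHn => wr; exists (val r).2; rewrite wr andbT pr; exact: (valP r).
exists (Sub ((val p).2, z) ez : Defs.arc e).
by rewrite /ld_rel SubK /= eqxx /= IHn SubK.
Qed.

Definition ld_dist (p q : Defs.arc e) : nat :=
  if p == q then 0%N else (dst (val p).2 (val q).1).+1.

Lemma dist_is_ld p q n : dist_is (@ld_rel T e) p q n = (n == ld_dist p q).
Proof.
suff dist_pq : dist_is (@ld_rel T e) p q (ld_dist p q).
  by apply/idP/eqP => [dist_n|->] //; exact: dist_is_uniq dist_n dist_pq.
have /andP[walk_pq /forallP min_pq] := dst_spec (val p).2 (val q).1.
rewrite /ld_dist; case: eqP => [->|/eqP neq_pq]; first by rewrite dist_is0.
apply/andP; split; first by rewrite walkb_ld.
apply/forallP => -[[|m] /= ltm]; first by rewrite walkb0 neq_pq.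
by rewrite walkb_ld; exact: (min_pq (Ordinal (ltm : (m < _)%N))).
Qed.

End DistanceFunction.

Section IntersectionNumbers.
Variables (T : finType) (e : rel T).
Hypothesis DR : distance_regular e.

(* The intersection number p^l_{ij}: the number of vertices at distance i from u
   and j from v, for any pair (u, v) at distance l (0 if there is none). *)
Definition isect_num (l i j : nat) : nat :=
  if [pick uv : T * T | dist_is e uv.1 uv.2 l] is Some uv
  then #|[set w | dist_is e uv.1 w i && dist_is e uv.2 w j]| else 0%N.

Lemma isect_numE l i j u v : dist_is e u v l ->
  #|[set w | dist_is e u w i && dist_is e v w j]| = isect_num l i j.
Proof.
move=> dist_uv; rewrite /isect_num; case: pickP => [uv dist_l|no_pair]; last first.
  by move: (no_pair (u, v)); rewrite /= dist_uv.
exact: DR dist_uv dist_l.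
Qed.

End IntersectionNumbers.

Lemma sum_enum_nat (R : nzSemiRingType) (T : finType) (Q : pred T) :
  \sum_(k < #|T|) (Q (enum_val k))%:R = #|[set w | Q w]|%:R :> R.
Proof.
have -> : \sum_(k < #|T|) (Q (enum_val k))%:R = \sum_w (Q w)%:R :> R.
  by rewrite (reindex (fun k : 'I_#|T| => enum_val k)) //; exact: onW_bij (enum_val_bij T).
rewrite -natr_sum -sum1_card [in RHS]big_mkcond /=; congr (_%:R).
by apply: eq_bigr => w _; rewrite inE; case: (Q w).
Qed.

Lemma sum_delta_ord (R : nzSemiRingType) (F : nat -> R) d D : (D <= d)%N ->
  \sum_(m < d.+1) F m * (D == m)%:R = F D.
Proof.
move=> le_Dd; rewrite (bigD1 (Ordinal (le_Dd : (D < d.+1)%N))) //= eqxx mulr1.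
rewrite big1 ?addr0 // => m neq_mD.
suff /negbTE -> : D != m by rewrite mulr0.
by apply: contra neq_mD => /eqP eq_Dm; apply/eqP/val_inj; rewrite /= eq_Dm.
Qed.

Section BoseMesner.
Variables (R : nzRingType) (T : finType) (e : rel T) (d : nat).
Hypotheses (sym_e : symmetric e) (irr_e : irreflexive e).
Hypothesis diam_le : forall x y : T, exists2 n, (n <= d)%N & dist_is e x y n.
Hypothesis DR : distance_regular e.

Local Notation dst := (dst e d).

(* M is constant on each distance class: M lies in the Bose-Mesner algebra. *)
Definition distance_indexed (M : 'M[R]_#|T|) : Prop :=
  exists f : nat -> R, forall i j, M i j = f (dst (enum_val i) (enum_val j)).

Lemma distance_indexed_scalar c : distance_indexed c%:M.
Proof.
exists (fun n => if n == 0%N then c else 0) => i j.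
rewrite mxE (dst_eq0 diam_le) (inj_eq enum_val_inj).
by case: (i == j); rewrite ?mulr1n ?mulr0n.
Qed.

Lemma distance_indexedD M N :
  distance_indexed M -> distance_indexed N -> distance_indexed (M + N).
Proof. by move=> [f Mf] [g Ng]; exists (fun n => f n + g n) => i j; rewrite mxE Mf Ng. Qed.

Lemma distance_indexedZ c M : distance_indexed M -> distance_indexed (c *: M).
Proof. by move=> [f Mf]; exists (fun n => c * f n) => i j; rewrite mxE Mf. Qed.

(* The key use of distance regularity: (M A)_{xy} = sum_m f(m) p^{dst x y}_{m 1}. *)
Lemma distance_indexed_mulA M :
  distance_indexed M -> distance_indexed (M *m adjmx R e).
Proof.
move=> [f Mf].
exists (fun l => \sum_(m < d.+1) f m * (isect_num e l m 1)%:R) => i j.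
set x := enum_val i; set y := enum_val j.
rewrite mxE.
under eq_bigr => k _.
  rewrite Mf mxE -(sum_delta_ord f (dst_le e d x (enum_val k))) mulr_suml.
over.
rewrite exchange_big /=; apply: eq_bigr => m _.
rewrite -(isect_numE DR m 1 (dst_spec diam_le x y)) -sum_enum_nat.
rewrite mulr_sumr; apply: eq_bigr => k _.
by rewrite (dist_isE diam_le) dist_is1 // sym_e eq_sym -mulrA -natrM mulnb.
Qed.

End BoseMesner.

Lemma adjmx_tr (R : nzRingType) (T : finType) (e : rel T) :
  symmetric e -> (adjmx R e)^T = adjmx R e.
Proof. by move=> sym_e; apply/matrixP => i j; rewrite !mxE sym_e. Qed.

Lemma eigenproj_distance_indexed (R : realType) (T : finType) (e : rel T) d
    (lam : R) (E : 'M[R]_#|T|) :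
  simple_graph e -> distance_regular e ->
  (forall x y : T, exists2 n, (n <= d)%N & dist_is e x y n) ->
  orth_proj E (eigenspace (adjmx R e) lam) -> distance_indexed e d E.
Proof.
move=> [sym_e irr_e] DR diam_le [symE [idemE imE]].
apply: (eigenproj_ind (adjmx_tr R sym_e) symE idemE imE).
- exact: distance_indexed_scalar.
- exact: distance_indexedD.
- exact: distance_indexedZ.
- exact: distance_indexed_mulA.
Qed.

Lemma sum_enum_delta (U : nmodType) (V : finType) (F : 'I_#|V| -> U) (a : V) :
  \sum_l F l *+ (enum_val l == a) = F (enum_rank a).
Proof.
rewrite (bigD1 (enum_rank a)) //= enum_rankK eqxx big1 ?addr0 // => l neq_la.
suff /negbTE -> : enum_val l != a by [].
by apply: contra neq_la => /eqP <-; rewrite enum_valK.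
Qed.

(* The vertex-arc incidence matrix of a map f from arcs to vertices; D_t and D_h
   are the incidence matrices of the tail and head maps. *)
Definition incidence_mx (R : nzRingType) (S V : finType) (f : S -> V) :
    'M[R]_(#|V|, #|S|) :=
  \matrix_(i, j) (enum_val i == f (enum_val j))%:R.

Lemma incidence_conj (R : nzRingType) (S V : finType) (f g : S -> V)
    (M : 'M[R]_#|V|) i j :
  ((incidence_mx R f)^T *m M *m incidence_mx R g) i j =
  M (enum_rank (f (enum_val i))) (enum_rank (g (enum_val j))).
Proof.
rewrite mxE -[RHS]sum_enum_delta; apply: eq_bigr => l _.
rewrite !mxE mulr_natr; congr (_ *+ _).
rewrite -[RHS](sum_enum_delta (fun k => M k l)); apply: eq_bigr => k _.
by rewrite !mxE mulr_natl.
Qed.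

Lemma sum_delta_range (R : nzSemiRingType) (c : nat -> R) d n :
  \sum_(1 <= l < d.+1) c l * (n == l)%:R = if (0 < n <= d)%N then c n else 0.
Proof.
elim: d => [|d IHd]; first by rewrite big_geq //; case: n.
rewrite big_nat_recr //= IHd; case: (ltngtP n d.+1) => [lt_n|gt_n|->].
- by rewrite ltnS in lt_n; rewrite lt_n mulr0 addr0.
- by rewrite (leqNgt n d) (ltnW gt_n) andbF mulr0 addr0.
- by rewrite ltnn andbF mulr1 add0r.
Qed.

Lemma sum_skew_dist_digraph (R : nzRingType) (V : finType) (r : rel V)
    (dist : V -> V -> nat) (c : nat -> R) d i j :
  (forall x y n, dist_is r x y n = (n == dist x y)) ->
  (\sum_(1 <= l < d.+1) c l *: skew_adjmx R (dist_digraph r l)) i j =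
  (if (0 < dist (enum_val i) (enum_val j) <= d)%N
   then c (dist (enum_val i) (enum_val j)) else 0) -
  (if (0 < dist (enum_val j) (enum_val i) <= d)%N
   then c (dist (enum_val j) (enum_val i)) else 0).
Proof.
move=> distE; rewrite summxE -!sum_delta_range -sumrB; apply: eq_bigr => l _.
by rewrite !mxE /dist_digraph !distE mulrBr ![(l == _)]eq_sym.
Qed.

Theorem lemma5p3 (R : realType) (T : finType) (e : rel T) (k d : nat)
    (lambda : R) (E : 'M[R]_#|T|) :
  simple_graph e -> connected_graph e -> regular_graph e k ->
  distance_regular e -> diameter_is e d ->
  eigenvalue (adjmx R e) lambda ->
  lambda != k%:R -> lambda != - k%:R ->
  orth_proj E (eigenspace (adjmx R e) lambda) ->
  exists c : nat -> R,
    (Dt R e)^T *m E *m Dh R e - (Dh R e)^T *m E *m Dt R e =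
    \sum_(1 <= i < d.+1) c i *: skew_adjmx R (dist_digraph (@ld_rel T e) i).
Proof.
move=> simple_e _ _ DR [diam_le _] _ _ _ projE.
have [f Ef] := eigenproj_distance_indexed simple_e DR diam_le projE.
have symE u v : E u v = E v u by rewrite -{1}projE.1 mxE.
have shift D : (D <= d)%N ->
    (if (0 < D.+1 <= d)%N then f d - f D.+1.-1 else 0) = f d - f D.
  move=> le_Dd /=; case: ifP => // /negbT; rewrite -ltnNge => lt_dD.
  by rewrite (@anti_leq D d) ?le_Dd ?subrr.
exists (fun l => f d - f l.-1); apply/matrixP => i j.
rewrite -[Dt R e]/(incidence_mx R (fun p : Defs.arc e => (val p).1)).
rewrite -[Dh R e]/(incidence_mx R (fun p : Defs.arc e => (val p).2)).
rewrite [LHS]mxE [X in _ + X]mxE !incidence_conj (sum_skew_dist_digraph _ _ _ _ (dist_is_ld diam_le)).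
rewrite [E _ (enum_rank (val _).2)]symE !Ef !enum_rankK /ld_dist.
case: eqP => [<-|/eqP neq_pq]; first by rewrite eqxx !subrr.
rewrite eq_sym (negbTE neq_pq) !shift ?dst_le //.
by rewrite opprB [RHS]addrC [RHS]addrA subrK.
Qed.
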